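(* Let $k\geq 2$. For every unitary $d\times d$ matrix $U$ with entries in $\mathbb{Z}[1/2,\zeta_{2^k}]$, write $U=A+B\zeta_{2^k}$ where $A,B$ are (uniquely determined) $d\times d$ matrices with entries in $\mathbb{Z}[1/2,\zeta_{2^{k-1}}]$, and set $\phi_k(U)=A\otimes I_2+B\otimes\Lambda_k$. Then $\phi_k$ is a well-defined function from the set of unitary matrices over $\mathbb{Z}[1/2,\zeta_{2^k}]$ to the set of unitary matrices over $\mathbb{Z}[1/2,\zeta_{2^{k-1}}]$, $\phi_k(U)$ has dimension $2d$, and for every $\ket{u}\in\mathbb{C}^d$, $$\phi_k(U)(\ket{u}\otimes\ket{\lambda_k})=(U\ket{u})\otimes\ket{\lambda_k}.$$ That is, $(\phi_k,\ket{\lambda_k})$ is a 2-dimensional catalytic embedding of the unitaries over $\mathbb{Z}[1/2,\zeta_{2^k}]$ into the unitaries over $\mathbb{Z}[1/2,\zeta_{2^{k-1}}]$.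
   Context: $\zeta_n=e^{2\pi i/n}$; $\mathbb{Z}[1/2,\zeta_n]$ is the smallest subring of $\mathbb{C}$ containing $1/2$ and $\zeta_n$. $\Lambda_k=\begin{bmatrix}0&1\\ \zeta_{2^{k-1}}&0\end{bmatrix}$ and $\ket{\lambda_k}=\frac{1}{\sqrt2}\begin{bmatrix}1\\ \zeta_{2^k}\end{bmatrix}$. For collections of unitaries $\mathcal{U},\mathcal{V}$, an $\ell$-dimensional catalytic embedding of $\mathcal{U}$ into $\mathcal{V}$ is a pair $(\phi,\ket{\lambda})$ with $\phi:\mathcal{U}\to\mathcal{V}$ and $\ket{\lambda}\in\mathbb{C}^\ell$ a state, such that whenever $U\in\mathcal{U}$ has dimension $d$, $\phi(U)$ has dimension $d\ell$ and $\phi(U)(\ket{u}\otimes\ket{\lambda})=(U\ket{u})\otimes\ket{\lambda}$ for all $\ket{u}\in\mathbb{C}^d$. *)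

From HB Require Import structures.
From mathcomp Require Import all_boot all_order all_algebra.
From mathcomp Require Import reals trigo.
From mathcomp.real_closed Require Import complex mxtens.

Set Implicit Arguments.
Unset Strict Implicit.
Unset Printing Implicit Defensive.

Import Order.TTheory GRing.Theory Num.Theory.
Local Open Scope ring_scope.

Section Defs.
Variable R : realType.

(* zeta_n = e^{2 pi i / n} = cos(2pi/n) + i sin(2pi/n)  (meaningful for n >= 1) *)
Definition zeta (n : nat) : R[i] :=
  Complex (cos (2 * pi / n%:R)) (sin (2 * pi / n%:R)).

(* Z[1/2, z] : the smallest subring of C containing 1/2 and z, i.e. x lies in
   every subring S of C with 1/2 \in S and z \in S. *)
Definition subring_of (S : R[i] -> Prop) : Prop :=
  [/\ S 1, (forall x y, S x -> S y -> S (x - y)) & (forall x y, S x -> S y -> S (x * y))].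

Definition in_Zhalf (z x : R[i]) : Prop :=
  forall S : R[i] -> Prop, subring_of S -> S (2%:R^-1) -> S z -> S x.

Definition mx_over (z : R[i]) (m n : nat) (M : 'M[R[i]]_(m, n)) : Prop :=
  forall i j, in_Zhalf z (M i j).

Definition adjmx (m n : nat) (M : 'M[R[i]]_(m, n)) : 'M[R[i]]_(n, m) :=
  (map_mx (@conjc R) M)^T.

Definition unitary (n : nat) (M : 'M[R[i]]_n) : Prop :=
  M *m adjmx M = 1%:M /\ adjmx M *m M = 1%:M.

(* Lambda_k = [[0, 1], [zeta_{2^{k-1}}, 0]] *)
Definition Lambda (k : nat) : 'M[R[i]]_2 :=
  \matrix_(i < 2, j < 2)
    (if (i : nat) == j then 0
     else if (i : nat) == 0%N then 1 else zeta (2 ^ (k - 1))).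

Definition lambda (k : nat) : 'cV[R[i]]_2 :=
  \col_(i < 2) (real_complex R (Num.sqrt (2 : R))^-1 *
               (if (i : nat) == 0%N then 1 else zeta (2 ^ k))).

End Defs.

(* Since zeta_{2^k}^2 = zeta_{2^(k-1)}, every element of Z[1/2, zeta_{2^k}] is a + zeta_{2^k} b
   with a, b in Z[1/2, zeta_{2^(k-1)}], and this decomposition is unique because
   X^(2^(k-1)) + 1 is irreducible over Q: a relation a + zeta_{2^k} b = 0 is a rational
   polynomial relation in zeta_{2^k}, so it survives replacing zeta_{2^k} by its conjugate
   -zeta_{2^k}.  As Lambda_k^2 = zeta_{2^(k-1)} just like zeta_{2^k}^2, the map
   A + zeta_{2^k} B |-> A (x) I + B (x) Lambda_k is multiplicative and commutes with the
   adjoint (uniqueness lets us read the product of two decompositions off componentwise),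
   so it sends unitaries to unitaries; finally Lambda_k lambda_k = zeta_{2^k} lambda_k gives
   the catalytic identity. *)

From HB Require Import structures.
From mathcomp Require Import all_boot all_order all_algebra all_field.
From mathcomp Require Import reals trigo.
From mathcomp.real_closed Require Import complex mxtens.
From mathcomp Require Import ring.

Set Implicit Arguments.
Unset Strict Implicit.
Unset Printing Implicit Defensive.

Import Order.TTheory GRing.Theory Num.Theory.
Local Open Scope ring_scope.

Lemma prim_root_half_turn (F : idomainType) (j : nat) (x : F) :
  (2 : F) != 0 -> x ^+ (2 ^ j) = -1 -> (2 ^ j.+1).-primitive_root x.
Proof.
move=> nz2 xj.
have x1 : x ^+ (2 ^ j.+1) = 1 by rewrite expnSr exprM xj sqrrN expr1n.
have [m pm /(dvdn_pfactor _ _ (isT : prime 2))[e le_ej em]] :=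
  prim_order_exists (expn_gt0 2 j.+1) x1.
subst m; move: le_ej; rewrite leq_eqVlt ltnS => /predU1P[ej | lt_ej]; first by rewrite -ej.
have : x ^+ (2 ^ j) = 1.
  have /dvdnP[c ->] : (2 ^ e %| 2 ^ j)%N by rewrite dvdn_exp2l.
  by rewrite mulnC exprM (prim_expr_order pm) expr1n.
by rewrite xj => /eqP; rewrite -subr_eq0 -opprD oppr_eq0 (negPf nz2).
Qed.

Section HalfTurnPoly.
Variable j : nat.
Local Notation p := ('X^(2 ^ j) + 1 : {poly rat}).

Lemma map_Xn_add1 (F : numFieldType) : map_poly (ratr : rat -> F) p = 'X^(2 ^ j) + 1.
Proof. by rewrite rmorphD /= map_polyXn rmorph1. Qed.

Lemma root_Xn_add1 (F : numFieldType) (x : F) :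
  root (map_poly ratr p) x = (x ^+ (2 ^ j) == -1).
Proof. by rewrite map_Xn_add1 /root hornerD hornerXn hornerC addr_eq0. Qed.

(* X^(2^j) + 1 is the cyclotomic polynomial of order 2^(j+1), hence irreducible over Q. *)
Lemma algC_root_Xn_add1 (x : algC) (q : {poly rat}) :
  x ^+ (2 ^ j) = -1 -> root (map_poly ratr q) x = (p %| q).
Proof.
move=> xj; have [pm [Dpm mon_pm] pmP] := minCpolyP x.
have prim_x : (2 ^ j.+1).-primitive_root x by apply: prim_root_half_turn; rewrite ?pnatr_eq0.
have size_pm : size pm = (2 ^ j).+1.
  rewrite -(size_map_poly (ratr : rat -> algC)) -Dpm (minCpoly_cyclotomic prim_x).
  by rewrite size_cyclotomic totient_pfactor // mul1n.
have mon_p : p \is monic by rewrite monicE lead_coefDl ?lead_coefXn // size_polyXn size_poly1 ltnS expn_gt0.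
have size_p : size p = (2 ^ j).+1 by rewrite size_polyDl ?size_polyXn // size_poly1 ltnS expn_gt0.
have -> : p = pm.
  have pm_p : pm %| p by rewrite -pmP root_Xn_add1 xj.
  by apply/esym/eqP; rewrite -eqp_monic // -dvdp_size_eqp // size_pm size_p.
exact: pmP.
Qed.

Lemma dvdp_Xn_add1 (F : numFieldType) (z : F) (q : {poly rat}) :
  z ^+ (2 ^ j) = -1 -> root (map_poly ratr q) z -> p %| q.
Proof.
move=> zj qz; pose g := gcdp p q.
have gz : root (map_poly ratr g) z by rewrite gcdp_map root_gcd qz root_Xn_add1 zj eqxx.
have size_g : size (map_poly (ratr : rat -> algC) g) != 1%N.
  rewrite size_map_poly; apply: contraTneq gz => /eqP/size_poly1P[c nz_c ->].
  by rewrite map_polyC rootC fmorph_eq0.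
have [x gx] := closed_rootP _ size_g.
have px : root (map_poly ratr p) x by apply: root_dvdp gx; rewrite dvdp_map dvdp_gcdl.
have /(algC_root_Xn_add1 g) : x ^+ (2 ^ j) = -1 by apply/eqP; rewrite -root_Xn_add1.
by rewrite gx => /esym/dvdp_trans; apply; rewrite dvdp_gcdr.
Qed.

(* Galois-theoretically: z and -z are conjugate over Q. *)
Lemma root_opp_half_turn (F : numFieldType) (z : F) (q : {poly rat}) :
  (0 < j)%N -> z ^+ (2 ^ j) = -1 ->
  root (map_poly ratr q) z -> root (map_poly ratr q) (- z).
Proof.
move=> j_gt0 zj /(dvdp_Xn_add1 zj)/dvdpP[s ->].
rewrite rmorphM rootM root_Xn_add1 exprNn -signr_odd oddX /= -[j == 0%N]negbK -lt0n j_gt0.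
by rewrite expr0 mul1r zj eqxx orbT.
Qed.
End HalfTurnPoly.

Section HalfRing.
Variable R : realType.
Implicit Types (c z x y : R[i]).

Lemma in_Zhalf_subring c : subring_of (in_Zhalf c).
Proof.
split=> [S [] // | x y hx hy S hS h2 hc | x y hx hy S hS h2 hc];
  case: (hS) => _ hB hM; [apply: hB | apply: hM]; by [apply: hx | apply: hy].
Qed.

Section Closure.
Variable c : R[i].
Local Notation Z := (in_Zhalf c).

Lemma in_Zhalf1 : Z 1. Proof. by case: (in_Zhalf_subring c). Qed.
Lemma in_ZhalfB x y : Z x -> Z y -> Z (x - y). Proof. by case: (in_Zhalf_subring c) => _ hB _; apply: hB. Qed.
Lemma in_ZhalfM x y : Z x -> Z y -> Z (x * y). Proof. by case: (in_Zhalf_subring c) => _ _ hM; apply: hM. Qed.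
Lemma in_Zhalf_half : Z 2%:R^-1. Proof. by []. Qed.
Lemma in_Zhalf_gen : Z c. Proof. by []. Qed.
Lemma in_Zhalf0 : Z 0. Proof. by rewrite -(subrr 1); apply: in_ZhalfB; apply: in_Zhalf1. Qed.
Lemma in_ZhalfN x : Z x -> Z (- x). Proof. by rewrite -sub0r; apply: in_ZhalfB; apply: in_Zhalf0. Qed.
Lemma in_ZhalfD x y : Z x -> Z y -> Z (x + y).
Proof. by move=> hx /in_ZhalfN hy; rewrite -[y]opprK; apply: in_ZhalfB. Qed.
Lemma in_Zhalf_nat n : Z n%:R.
Proof. by elim: n => [|n IHn]; [apply: in_Zhalf0 | rewrite mulrS; apply: in_ZhalfD (in_Zhalf1) IHn]. Qed.
Lemma in_ZhalfX x n : Z x -> Z (x ^+ n).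
Proof. by move=> hx; elim: n => [|n IHn]; [apply: in_Zhalf1 | rewrite exprS; apply: in_ZhalfM]. Qed.
Lemma in_Zhalf_sum (I : finType) (F : I -> R[i]) : (forall i, Z (F i)) -> Z (\sum_i F i).
Proof. by move=> hF; apply: big_ind => //; [apply: in_Zhalf0 | apply: in_ZhalfD]. Qed.

Lemma in_Zhalf_conj : Z c^*%C -> forall x, Z x -> Z x^*%C.
Proof.
move=> hc x hx; apply: (hx (fun y => Z y^*%C)) => //.
  split=> [|a b | a b]; rewrite ?rmorph1 ?rmorphB ?rmorphM;
  by [apply: in_Zhalf1 | apply: in_ZhalfB | apply: in_ZhalfM].
by rewrite conjc_inv conjc_nat.
Qed.

Lemma in_Zhalf_ratr_poly x : Z x -> exists r : {poly rat}, x = (map_poly ratr r).[c].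
Proof.
move=> hx; apply: (hx (fun y => exists r : {poly rat}, y = (map_poly ratr r).[c])).
split=> [|a b [r ->] [s ->] | a b [r ->] [s ->]].
- by exists 1; rewrite rmorph1 hornerC.
- by exists (r - s); rewrite rmorphB hornerD hornerN.
- by exists (r * s); rewrite rmorphM hornerM.
- exists (2%:R^-1)%:P; by rewrite map_polyC hornerC /= fmorphV rmorph_nat.
- by exists 'X; rewrite map_polyX hornerX.
Qed.
End Closure.

Lemma in_Zhalf_split z x : in_Zhalf z x ->
  exists a b, [/\ in_Zhalf (z ^+ 2) a, in_Zhalf (z ^+ 2) b & x = a + z * b].
Proof.
move=> hx; apply: (hx (fun y => exists a b,
  [/\ in_Zhalf (z ^+ 2) a, in_Zhalf (z ^+ 2) b & y = a + z * b])).
split=> [|x1 y1 [a [b [ha hb ->]]] [c [d [hc hd ->]]] | x1 y1 [a [b [ha hb ->]]] [c [d [hc hd ->]]]].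
- by exists 1, 0; rewrite mulr0 addr0; split; [apply: in_Zhalf1 | apply: in_Zhalf0 |].
- exists (a - c), (b - d); split; [exact: in_ZhalfB | exact: in_ZhalfB | ring].
- exists (a * c + z ^+ 2 * (b * d)), (a * d + b * c); split; last by ring.
    by apply: in_ZhalfD; apply: in_ZhalfM => //; apply: in_ZhalfM.
  by apply: in_ZhalfD; apply: in_ZhalfM.
- by exists 2%:R^-1, 0; rewrite mulr0 addr0; split; [apply: in_Zhalf_half | apply: in_Zhalf0 |].
- by exists 0, 1; rewrite mulr1 add0r; split; [apply: in_Zhalf0 | apply: in_Zhalf1 |].
Qed.

(* a + z b = 0 is a rational polynomial relation in z, so it also holds at -z. *)
Lemma in_Zhalf_split_eq0 (j : nat) z a b : (0 < j)%N -> z ^+ (2 ^ j) = -1 ->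
  in_Zhalf (z ^+ 2) a -> in_Zhalf (z ^+ 2) b -> a + z * b = 0 -> a = 0 /\ b = 0.
Proof.
move=> j_gt0 zj /in_Zhalf_ratr_poly[r ->] /in_Zhalf_ratr_poly[s ->] rsz.
pose q : {poly rat} := r \Po 'X^2 + 'X * (s \Po 'X^2).
have qE y : (map_poly ratr q).[y] = (map_poly ratr r).[y ^+ 2] + y * (map_poly ratr s).[y ^+ 2].
  by rewrite rmorphD rmorphM /= !map_comp_poly map_polyX map_polyXn hornerD hornerM
    !horner_comp hornerX hornerXn.
have : root (map_poly ratr q) (- z).
  by apply: (root_opp_half_turn j_gt0 zj); rewrite /root qE rsz.
rewrite /root qE sqrrN => /eqP rsNz.
set ra := (map_poly ratr r).[_] in rsz rsNz *; set sb := (map_poly ratr s).[_] in rsz rsNz *.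
have ra0 : ra = 0.
  have : (ra + z * sb) + (ra + - z * sb) = 2%:R * ra by ring.
  by rewrite rsz rsNz addr0 => /esym/eqP; rewrite mulf_eq0 pnatr_eq0 => /eqP.
have z_neq0 : z != 0.
  by apply: contra_eqN zj => /eqP->; rewrite expr0n expn_eq0 /= eq_sym oppr_eq0 oner_eq0.
by split=> //; move/eqP: rsz; rewrite ra0 add0r mulf_eq0 (negPf z_neq0) => /eqP.
Qed.
End HalfRing.

Section MxOver.
Variable R : realType.

Section Closure.
Variable c : R[i].
Local Notation W := (mx_over c).

Lemma mx_over0 m n : W (0 : 'M_(m, n)).
Proof. by move=> i j; rewrite mxE; apply: in_Zhalf0. Qed.

Lemma mx_over1 n : W (1%:M : 'M_n).
Proof. by move=> i j; rewrite mxE; apply: in_Zhalf_nat. Qed.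

Lemma mx_overD m n (A B : 'M_(m, n)) : W A -> W B -> W (A + B).
Proof. by move=> hA hB i j; rewrite mxE; apply: in_ZhalfD. Qed.

Lemma mx_overB m n (A B : 'M_(m, n)) : W A -> W B -> W (A - B).
Proof. by move=> hA hB i j; rewrite !mxE; apply: in_ZhalfB. Qed.

Lemma mx_overZ m n x (A : 'M_(m, n)) : in_Zhalf c x -> W A -> W (x *: A).
Proof. by move=> hx hA i j; rewrite mxE; apply: in_ZhalfM. Qed.

Lemma mx_overM m n p (A : 'M_(m, n)) (B : 'M_(n, p)) : W A -> W B -> W (A *m B).
Proof. by move=> hA hB i j; rewrite mxE; apply: in_Zhalf_sum => l; apply: in_ZhalfM. Qed.

Lemma mx_over_tens m n p q (A : 'M_(m, n)) (B : 'M_(p, q)) : W A -> W B -> W (A *t B).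
Proof. by move=> hA hB i j; rewrite mxE; apply: in_ZhalfM. Qed.

Lemma mx_over_adj m n (A : 'M_(m, n)) : in_Zhalf c c^*%C -> W A -> W (adjmx A).
Proof. by move=> hc hA i j; rewrite !mxE; apply: in_Zhalf_conj. Qed.
End Closure.

Lemma mx_over_split (z : R[i]) m n (M : 'M_(m, n)) : mx_over z M ->
  exists A B, [/\ mx_over (z ^+ 2) A, mx_over (z ^+ 2) B & M = A + z *: B].
Proof.
move=> hM; have /fin_all_exists[f hf] := fun ij : 'I_m * 'I_n => in_Zhalf_split (hM ij.1 ij.2).
have /fin_all_exists[g hg] := fun ij : 'I_m * 'I_n => hf ij.
exists (\matrix_(i, j) f (i, j)), (\matrix_(i, j) g (i, j)).
by split=> [i j | i j | ]; [rewrite mxE | rewrite mxE | apply/matrixP => i j; rewrite !mxE];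
  case: (hg (i, j)).
Qed.

Lemma mx_over_split_uniq (j : nat) (z : R[i]) m n (A B C D : 'M_(m, n)) :
  (0 < j)%N -> z ^+ (2 ^ j) = -1 ->
  mx_over (z ^+ 2) A -> mx_over (z ^+ 2) B -> mx_over (z ^+ 2) C -> mx_over (z ^+ 2) D ->
  A + z *: B = C + z *: D -> A = C /\ B = D.
Proof.
move=> j_gt0 zj hA hB hC hD eABCD.
have eq0 i l : (A - C) i l = 0 /\ (B - D) i l = 0.
  apply: (in_Zhalf_split_eq0 j_gt0 zj); [exact: mx_overB | exact: mx_overB |].
  by move/matrixP: eABCD => /(_ i l); rewrite !mxE mulrBr addrACA => ->; rewrite -opprD subrr.
by split; apply/matrixP => i l; apply/eqP; rewrite -subr_eq0;
  [case: (eq0 i l) => /eqP + _ | case: (eq0 i l) => _ /eqP]; rewrite !mxE.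
Qed.
End MxOver.

Section CatalyticMx.
Variable F : comNzRingType.

Lemma tensmxDl m n p q (A1 A2 : 'M[F]_(m, n)) (B : 'M[F]_(p, q)) :
  (A1 + A2) *t B = A1 *t B + A2 *t B.
Proof. by apply/matrixP => i j; rewrite !mxE mulrDl. Qed.

Lemma tensmxZl m n p q x (A : 'M[F]_(m, n)) (B : 'M[F]_(p, q)) :
  (x *: A) *t B = x *: (A *t B).
Proof. by apply/matrixP => i j; rewrite !mxE mulrA. Qed.

Lemma tensmxZr m n p q x (A : 'M[F]_(m, n)) (B : 'M[F]_(p, q)) :
  A *t (x *: B) = x *: (A *t B).
Proof. by apply/matrixP => i j; rewrite !mxE mulrCA. Qed.

Lemma tensmx11 m n : (1%:M : 'M[F]_m) *t (1%:M : 'M[F]_n) = 1%:M.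
Proof.
apply/matrixP => i j.
case: (mxtens_indexP i) => i1 i2; case: (mxtens_indexP j) => j1 j2.
rewrite tensmxE !mxE (inj_eq (can_inj (@mxtens_indexK m n))) xpair_eqE.
by case: (i1 == j1); case: (i2 == j2); rewrite ?mulr1 ?mulr0.
Qed.

Lemma mulmx_split m n p (z : F) (A B : 'M[F]_(m, n)) (C D : 'M[F]_(n, p)) :
  (A + z *: B) *m (C + z *: D) =
  (A *m C + z ^+ 2 *: (B *m D)) + z *: (A *m D + B *m C).
Proof.
rewrite mulmxDl !mulmxDr -!scalemxAl -!scalemxAr scalerA -expr2 scalerDr.
by rewrite [z *: (B *m C) + _]addrC addrACA.
Qed.

Definition catalytic_mx p m n (L : 'M[F]_p) (A B : 'M[F]_(m, n)) : 'M[F]_(m * p, n * p) :=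
  A *t 1%:M + B *t L.

Section Catalyst.
Variables (p : nat) (L : 'M[F]_p).

Lemma catalytic_mx1 m : catalytic_mx L (1%:M : 'M_m) 0 = 1%:M.
Proof. by rewrite /catalytic_mx tensmx11 tens0mx addr0. Qed.

Lemma catalytic_mxM (w : F) m n r (A B : 'M[F]_(m, n)) (C D : 'M[F]_(n, r)) :
  L *m L = w *: 1%:M ->
  catalytic_mx L A B *m catalytic_mx L C D =
  catalytic_mx L (A *m C + w *: (B *m D)) (A *m D + B *m C).
Proof.
move=> LL; rewrite /catalytic_mx mulmxDl !mulmxDr !tensmx_mul !mulmx1 !mul1mx LL.
rewrite tensmxZr -tensmxZl !tensmxDl.
by rewrite [B *m C *t L + _]addrC addrACA.
Qed.

Lemma catalytic_mx_tens (z : F) m n (A B : 'M[F]_(m, n)) (u : 'cV[F]_n) (v : 'cV[F]_p) :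
  L *m v = z *: v -> catalytic_mx L A B *m (u *t v) = ((A + z *: B) *m u) *t v.
Proof.
move=> Lv; rewrite /catalytic_mx mulmxDl !tensmx_mul mul1mx Lv tensmxZr -tensmxZl.
by rewrite -tensmxDl mulmxDl scalemxAl.
Qed.
End Catalyst.
End CatalyticMx.

Section Adjoint.
Variable R : realType.
Implicit Types x z w : R[i].

Lemma adjmxD m n (A B : 'M[R[i]]_(m, n)) : adjmx (A + B) = adjmx A + adjmx B.
Proof. by apply/matrixP => i j; rewrite !mxE rmorphD. Qed.

Lemma adjmxZ m n x (A : 'M[R[i]]_(m, n)) : adjmx (x *: A) = x^*%C *: adjmx A.
Proof. by apply/matrixP => i j; rewrite !mxE rmorphM. Qed.

Lemma adjmx_tens m n p q (A : 'M[R[i]]_(m, n)) (B : 'M[R[i]]_(p, q)) :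
  adjmx (A *t B) = adjmx A *t adjmx B.
Proof. by rewrite /adjmx map_mxT trmx_tens. Qed.

Lemma adjmx1 n : adjmx (1%:M : 'M[R[i]]_n) = 1%:M.
Proof. by apply/matrixP => i j; rewrite !mxE conjc_nat eq_sym. Qed.

Lemma adjmx_split z w m n (A B : 'M[R[i]]_(m, n)) : z * z^*%C = 1 -> z ^+ 2 = w ->
  adjmx (A + z *: B) = adjmx A + z *: (w^*%C *: adjmx B).
Proof.
by move=> zJ <-; rewrite adjmxD adjmxZ scalerA rmorphXn expr2 mulrA zJ mul1r.
Qed.

Lemma adjmx_catalytic p x (L : 'M[R[i]]_p) m n (A B : 'M[R[i]]_(m, n)) :
  adjmx L = x *: L ->
  adjmx (catalytic_mx L A B) = catalytic_mx L (adjmx A) (x *: adjmx B).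
Proof. by move=> hL; rewrite adjmxD !adjmx_tens adjmx1 hL tensmxZr -tensmxZl. Qed.
End Adjoint.

Section Zeta.
Variable R : realType.

Definition cis (t : R) : R[i] := Complex (cos t) (sin t).

Lemma cis0 : cis 0 = 1.
Proof. by rewrite /cis cos0 sin0. Qed.

Lemma cisD a b : cis (a + b) = cis a * cis b.
Proof.
by rewrite /cis cosD sinD; apply/eqP; rewrite eq_complex /= (addrC (sin a * _)) !eqxx.
Qed.

Lemma cisN t : cis (- t) = (cis t)^*%C.
Proof. by rewrite /cis cosN sinN. Qed.

Lemma cisXn t m : cis t ^+ m = cis (t *+ m).
Proof. by elim: m => [|m IHm]; rewrite ?cis0 // exprS IHm mulrS cisD. Qed.

Lemma zetaE n : zeta R n = cis (2 * pi / n%:R).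
Proof. by []. Qed.

Lemma zeta_conjM n : zeta R n * (zeta R n)^*%C = 1.
Proof. by rewrite zetaE -cisN -cisD subrr cis0. Qed.

Lemma zeta_expn n : (0 < n)%N -> zeta R n ^+ n = 1.
Proof.
move=> n_gt0; rewrite zetaE cisXn -[_ *+ n]mulr_natr mulfVK ?pnatr_eq0 -?lt0n //.
by rewrite mulr_natl /cis cos2pi sin2pi.
Qed.

Lemma zeta_double_sqr n : (0 < n)%N -> zeta R (n * 2) ^+ 2 = zeta R n.
Proof.
move=> n_gt0; rewrite !zetaE cisXn natrM mulr2n; congr cis.
by field; rewrite pnatr_eq0 -lt0n n_gt0.
Qed.

Lemma zeta_double_half n : (0 < n)%N -> zeta R (n * 2) ^+ n = -1.
Proof.
move=> n_gt0; rewrite zetaE cisXn; have -> : 2 * pi / (n * 2)%:R *+ n = pi :> R.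
  by rewrite natrM -[_ *+ n]mulr_natr; field; rewrite pnatr_eq0 -lt0n n_gt0.
by rewrite /cis cospi sinpi; apply/eqP; rewrite eq_complex /= oppr0 !eqxx.
Qed.

Lemma in_Zhalf_zeta_conj n : (0 < n)%N -> in_Zhalf (zeta R n) (zeta R n)^*%C.
Proof.
move=> n_gt0; have -> : (zeta R n)^*%C = zeta R n ^+ n.-1.
  have := zeta_expn n_gt0; rewrite -(prednK n_gt0) exprS prednK // => e.
  by rewrite -[LHS]mulr1 -e mulrA (mulrC _ (zeta R n)) zeta_conjM mul1r.
by apply: in_ZhalfX; apply: in_Zhalf_gen.
Qed.
End Zeta.

Section Lambda.
Variables (R : realType) (k : nat).
Local Notation w := (zeta R (2 ^ (k - 1))).

Lemma zeta_pow2_sqr : (0 < k)%N -> zeta R (2 ^ k) ^+ 2 = w.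
Proof. by move=> k_gt0; rewrite -{1}(subnK k_gt0) addn1 expnSr zeta_double_sqr ?expn_gt0. Qed.

Lemma zeta_pow2_half : (0 < k)%N -> zeta R (2 ^ k) ^+ (2 ^ (k - 1)) = -1.
Proof. by move=> k_gt0; rewrite -{1}(subnK k_gt0) addn1 expnSr zeta_double_half ?expn_gt0. Qed.

Lemma Lambda_sqr : Lambda R k *m Lambda R k = w *: 1%:M.
Proof.
apply/matrixP => i j; rewrite !mxE !big_ord_recl big_ord0 !mxE.
by case: i => [[|[|i]]] hi; case: j => [[|[|j]]] hj //=;
  rewrite ?mul0r ?mulr0 ?mul1r ?mulr1 ?addr0 ?add0r.
Qed.

Lemma adjmx_Lambda : adjmx (Lambda R k) = w^*%C *: Lambda R k.
Proof.
apply/matrixP => i j; rewrite !mxE !(fun_if (@conjc _)) rmorph0 rmorph1.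
have := zeta_conjM R (2 ^ (k - 1)); set wc := (w^*)%C => ww.
by case: i => [[|[|i]]] hi; case: j => [[|[|j]]] hj //=; rewrite ?mulr0 ?mulr1 // mulrC.
Qed.

Lemma Lambda_lambda : (0 < k)%N -> Lambda R k *m lambda R k = zeta R (2 ^ k) *: lambda R k.
Proof.
move=> /zeta_pow2_sqr zz; apply/matrixP => i j; rewrite !mxE !big_ord_recl big_ord0 !mxE.
case: i => [[|[|i]]] hi //=; rewrite ?mul0r ?add0r ?addr0 ?mul1r ?mulr1.
  by rewrite mulrC.
by rewrite -zz; ring.
Qed.

Lemma mx_over_Lambda : mx_over w (Lambda R k).
Proof.
move=> i j; rewrite mxE; case: ifP => _; first exact: in_Zhalf0.
by case: ifP => _; [exact: in_Zhalf1 | exact: in_Zhalf_gen].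
Qed.
End Lambda.

Lemma catalytic_mx_mul_eq1 (R : realType) (j : nat) (z w : R[i]) p (L : 'M_p) m
    (A B C D : 'M_m) :
  (0 < j)%N -> z ^+ (2 ^ j) = -1 -> z ^+ 2 = w -> L *m L = w *: 1%:M ->
  mx_over w A -> mx_over w B -> mx_over w C -> mx_over w D ->
  (A + z *: B) *m (C + z *: D) = 1%:M -> catalytic_mx L A B *m catalytic_mx L C D = 1%:M.
Proof.
move=> j_gt0 zj <- LL hA hB hC hD; rewrite mulmx_split (catalytic_mxM _ _ _ _ LL) => ABCD1.
have [-> ->] : A *m C + z ^+ 2 *: (B *m D) = 1%:M /\ A *m D + B *m C = 0.
  apply: (mx_over_split_uniq j_gt0 zj); last by rewrite ABCD1 scaler0 addr0.
  - exact: mx_overD (mx_overM hA hC) (mx_overZ (in_Zhalf_gen (c := _)) (mx_overM hB hD)).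
  - exact: mx_overD (mx_overM hA hD) (mx_overM hB hC).
  - exact: mx_over1.
  - exact: mx_over0.
exact: catalytic_mx1.
Qed.

Theorem proposition1 (R : realType) (k : nat) (hk : (2 <= k)%N) (d : nat)
    (U : 'M[R[i]]_d) :
  unitary U -> mx_over (zeta R (2 ^ k)) U ->
  (exists! AB : 'M[R[i]]_d * 'M[R[i]]_d,
      [/\ mx_over (zeta R (2 ^ (k - 1))) AB.1,
          mx_over (zeta R (2 ^ (k - 1))) AB.2
        & U = AB.1 + zeta R (2 ^ k) *: AB.2]) /\
  (forall A B : 'M[R[i]]_d,
      mx_over (zeta R (2 ^ (k - 1))) A -> mx_over (zeta R (2 ^ (k - 1))) B ->
      U = A + zeta R (2 ^ k) *: B ->
      let P : 'M[R[i]]_(d * 2) := A *t (1%:M : 'M[R[i]]_2) + B *t Lambda R k in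
      [/\ unitary P,
          mx_over (zeta R (2 ^ (k - 1))) P
        & forall u : 'cV[R[i]]_d,
            P *m (u *t lambda R k) = (U *m u) *t lambda R k]).
Proof.
move=> [UUa UaU] hU.
have k_gt0 : (0 < k)%N by apply: ltnW.
have km1_gt0 : (0 < k - 1)%N by rewrite subn_gt0.
have zz := zeta_pow2_sqr R k_gt0; have zj := zeta_pow2_half R k_gt0.
split.
  have [A [B]] := mx_over_split hU; rewrite zz => -[hA hB eU].
  exists (A, B); split=> // -[C D] /= [hC hD eC].
  rewrite -zz in hA hB hC hD.
  by have [-> ->] := mx_over_split_uniq km1_gt0 zj hA hB hC hD (etrans (esym eU) eC).
move=> A B hA hB eU P; rewrite -/(catalytic_mx (Lambda R k) A B) in P *.
have hw := in_Zhalf_zeta_conj (R := R) (expn_gt0 2 (k - 1)).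
have hA' := mx_over_adj hw hA; have hB' := mx_overZ hw (mx_over_adj hw hB).
have adjU := adjmx_split A B (zeta_conjM R (2 ^ k)) zz; rewrite -eU in adjU.
have eq1 := catalytic_mx_mul_eq1 km1_gt0 zj zz (Lambda_sqr R k).
split.
- rewrite /unitary (adjmx_catalytic _ _ (adjmx_Lambda R k)).
  by split; apply: eq1; rewrite // -eU -adjU.
- exact: mx_overD (mx_over_tens hA (mx_over1 (n := 2))) (mx_over_tens hB (mx_over_Lambda (k := k))).
- by move=> u; rewrite (catalytic_mx_tens _ _ _ (Lambda_lambda R k_gt0)) -eU.
Qed.
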